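(* Let $(\mathcal M,X,\bot)$ be a concurrent system and $\nu=(\nu_\alpha)_{\alpha\in X}$ a uniform measure for it, with induced fibred valuation $f_\alpha(x)=\nu_\alpha(\Uparrow x)$. For $\alpha\in X$, let $h_\alpha(c)=\sum_{c'\in\mathscr C,\ c\le c'}(-1)^{|c'|-|c|}f_\alpha(c')$ be the M\''obius transform of $f_\alpha$ on cliques. Then $h_\alpha(c)>0$ for every positive node $(\alpha,c)$ of the DSC.
   Context: A trace monoid $\mathcal M=\mathcal M(\Sigma,I)$ is $\langle\Sigma\mid ab=ba\ ((a,b)\in I)\rangle$, $\Sigma$ finite, $I$ irreflexive symmetric; $|x|$ is length. A clique is a trace of pairwise distinct letters pairwise in $I$ (including $\varepsilon$); $\mathscr C$ is the set of cliques, $\mathfrak C=\mathscr C\setminus\{\varepsilon\}$; $c\le c'$ for cliques means inclusion of letter sets. For $c,c'\in\mathfrak C$, $c\to c'$ means every letter of $c'$ is in relation $(\Sigma\times\Sigma)\setminus I$ with some letter of $c$. Each nonempty trace $x$ has a unique normal form $c_1\cdots c_h$, $c_i\in\mathfrak C$, $c_i\to c_{i+1}$; $C_i(x)=c_i$ ($i\le h$), $\varepsilon$ otherwise. A concurrent system $(\mathcal M,X,\bot)$: $X$ finite, $\bot\notin X$, right action of $\mathcal M$ on $X\cup\{\bot\}$ with $\bot\cdot x=\bot$; $\mathcal M_\alpha=\{x:\alpha\cdot x\ne\bot\}$, $\mathfrak C_\alpha=\mathfrak C\cap\mathcal M_\alpha$. DSC nodes are the pairs $(\alpha,c)$, $c\in\mathfrak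 C_\alpha$; $(\alpha,c)$ is positive if some $x\in\mathcal M_\alpha$ satisfies $C_1(xy)=c$ for all $y\in\mathcal M_{\alpha\cdot x}$. Boundary: $\partial\mathcal M$ = sequences $(c_i)_{i\ge1}$ in $\mathfrak C$ with $c_i\to c_{i+1}$ (product topology), $C_i$ projections; on $\mathcal M\cup\partial\mathcal M$, $\xi\le\xi'$ iff $C_i(\xi)\le C_i(\xi')$ for all $i$; $\Uparrow x=\{\xi\in\partial\mathcal M:x\le\xi\}$; $\partial\mathcal M_\alpha$ is the closure of $\mathcal M_\alpha$ in $\mathcal M\cup\partial\mathcal M$ intersected with $\partial\mathcal M$. A uniform measure is a family $(\nu_\alpha)_{\alpha\in X}$ of Borel probability measures on $\partial\mathcal M_\alpha$ with $\nu_\alpha(\Uparrow(xy))=\nu_\alpha(\Uparrow x)\nu_{\alpha\cdot x}(\Uparrow y)$ for $x\in\mathcal M_\alpha$, $y\in\mathcal M_{\alpha\cdot x}$, and $\nu_\alpha(\Uparrow x)=t^{|x|}\Delta(\alpha,\alpha\cdot x)$ for all $x\in\mathcal M_\alpha$, for some $t>0$ and $\Delta:X\times X\to\mathbb R_{>0}$. *)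

From HB Require Import structures.
From mathcomp Require Import all_boot all_order all_algebra.
From mathcomp Require Import all_classical all_reals all_analysis.
Set Implicit Arguments. Unset Strict Implicit. Unset Printing Implicit Defensive.
Import Order.TTheory GRing.Theory Num.Theory.
Local Open Scope ring_scope.

(* ---------- Trace monoid M(Sigma, I) ----------
   Traces are represented by words (seq Sigma); every function used below
   (length, action, normal form cliques) is invariant under commutation of
   independent letters, so quantifying over words = quantifying over traces. *)

Section Traces.
Variables (Sigma : finType) (I : rel Sigma).

Definition is_clique (c : {set Sigma}) : bool :=
  [forall a in c, forall b in c, (a != b) ==> I a b].

Definition clique_arrow (c c' : {set Sigma}) : bool :=
  [forall b in c', exists a in c, ~~ I a b].

(* Cartier-Foata normal form by the heap-of-pieces algorithm: the state is
   (height h, levels s), with s i the clique at level i (0-based: s i = C_{i+1}). *)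
Definition nf_step (st : nat * (nat -> {set Sigma})) (a : Sigma) :=
  let: (h, s) := st in
  let l := (\max_(i < h | [exists b in s i, ~~ I a b]) i.+1)%N in
  (maxn h l.+1, fun i => if i == l then a |: s i else s i).

Definition nf_state (w : seq Sigma) := foldl nf_step (0%N, fun _ => finset.set0) w.

(* Cl w i = C_{i+1}(w) : the (i+1)-th clique of the normal form, set0 beyond height *)
Definition Cl (w : seq Sigma) (i : nat) : {set Sigma} := (nf_state w).2 i.

(* carrier of infinite clique sequences; xi i stands for C_{i+1}(xi) *)
Definition cseq := nat -> {set Sigma}.

Definition boundary : set cseq :=
  [set xi | forall i, [/\ xi i != finset.set0, is_clique (xi i) & clique_arrow (xi i) (xi i.+1)]]%classic.

(* Up-set  ⇑x = { xi in boundary | x <= xi }, x <= xi iff C_i(x) <= C_i(xi) for all i *)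
Definition upset (w : seq Sigma) : set cseq :=
  [set xi | boundary xi /\ forall i, Cl w i \subset xi i]%classic.

End Traces.

(* the sigma-algebra on the boundary carrier: generated by the coordinate
   cylinders (= Borel sets of the product of discrete topologies) *)
Definition cseqT (Sigma : finType) := cseq Sigma.
HB.instance Definition _ (Sigma : finType) := gen_eqMixin (cseqT Sigma).
HB.instance Definition _ (Sigma : finType) := gen_choiceMixin (cseqT Sigma).
HB.instance Definition _ (Sigma : finType) :=
  isPointed.Build (cseqT Sigma) (fun _ => finset.set0).

Definition cylinders (Sigma : finType) : set (set (cseqT Sigma)) :=
  [set A | exists (i : nat) (c : {set Sigma}), A = [set xi | xi i = c]%classic]%classic.

Definition BndSpace (Sigma : finType) := g_sigma_algebraType (@cylinders Sigma).

Section Concurrent.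
Variables (Sigma X : finType) (I : rel Sigma) (act : X -> Sigma -> option X).

(* right action on X ∪ {⊥}, ⊥ = None *)
Definition act_opt (o : option X) (a : Sigma) : option X := obind (act^~ a) o.
Definition run (alpha : X) (w : seq Sigma) : option X := foldl act_opt (Some alpha) w.

(* the letter action respects commutations, hence is an action of M(Sigma,I) *)
Definition action_compatible : Prop :=
  forall (alpha : X) (a b : Sigma), I a b ->
    act_opt (act alpha a) b = act_opt (act alpha b) a.

Definition inM (alpha : X) (w : seq Sigma) : bool := run alpha w != None.

Definition cword (c : {set Sigma}) : seq Sigma := enum c.

(* ∂M_alpha: boundary points in the closure of M_alpha inside M ∪ ∂M
   (topology: the product topology on clique sequences, traces being
   sequences eventually epsilon) *)
Definition boundary_at (alpha : X) : set (cseq Sigma) :=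
  [set xi | boundary I xi /\
     forall n : nat, exists w, inM alpha w /\ forall i, (i < n)%N -> Cl I w i = xi i]%classic.

Definition positive_node (alpha : X) (c : {set Sigma}) : Prop :=
  [/\ is_clique I c, c != finset.set0, inM alpha (cword c) &
    exists2 x, inM alpha x &
      forall beta, run alpha x = Some beta ->
        forall y, inM beta y -> Cl I (x ++ y) 0 = c].

End Concurrent.

(* uniform measure: a family of Borel probability measures nu alpha on ∂M_alpha
   (represented as probability measures on the clique-sequence space carried
   by ∂M_alpha) *)
Definition uniform_measure (Sigma X : finType) (I : rel Sigma)
  (act : X -> Sigma -> option X) (R : realType)
  (nu : X -> probability (BndSpace Sigma) R) : Prop :=
  [/\ (forall alpha, nu alpha (boundary_at I act alpha) = 1%E),
      (forall alpha x beta y, run act alpha x = Some beta -> inM act beta y ->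
         nu alpha (upset I (x ++ y)) = (nu alpha (upset I x) * nu beta (upset I y))%E) &
      exists t : R, exists Delta : X -> X -> R,
        [/\ 0 < t, (forall a b, 0 < Delta a b) &
          forall alpha x beta, run act alpha x = Some beta ->
            nu alpha (upset I x) = (t ^+ size x * Delta alpha beta)%:E]].

Definition fval (Sigma X : finType) (I : rel Sigma) (R : realType)
  (nu : X -> probability (BndSpace Sigma) R) (alpha : X) (w : seq Sigma) : R :=
  fine (nu alpha (upset I w)).

Definition mobius (Sigma X : finType) (I : rel Sigma) (R : realType)
  (nu : X -> probability (BndSpace Sigma) R) (alpha : X) (c : {set Sigma}) : R :=
  \sum_(c' : {set Sigma} | is_clique I c' && (c \subset c'))
     (-1) ^+ (#|c'| - #|c|) * fval I nu alpha (cword c').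

From HB Require Import structures.
From mathcomp Require Import all_boot all_order all_algebra.
From mathcomp Require Import all_classical all_reals all_analysis.
From mathcomp Require Import lra.
Set Implicit Arguments. Unset Strict Implicit. Unset Printing Implicit Defensive.
Import Order.TTheory GRing.Theory Num.Theory.
Local Open Scope ring_scope.

(* By Moebius inversion on the boolean lattice of cliques, h_alpha(c) is the
   nu_alpha-probability that the first clique C_1 of a boundary point equals c,
   i.e. contains c and avoids its complement.  Events "C_1 contains E and
   avoids L" get positive probability by induction along the word x that
   witnesses positivity of the node: for x = e x', inclusion-exclusion and the
   multiplicativity of nu on up-sets of cliques factor the event as
   nu_alpha(e in C_1) times the event "C_1 contains E minus e and avoids the
   letters of L independent of e" under nu_(alpha.e).  Once x is exhausted the
   event holds on all of M_beta, hence has full measure, nu_beta living on the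
   closure of M_beta. *)

Section FirstClique.
Local Open Scope nat_scope.
Variables (Sigma : finType) (I : rel Sigma).
Hypothesis I_sym : symmetric I.
Implicit Types (w s : seq Sigma) (a b : Sigma) (c d : {set Sigma}).

Fixpoint min_letter w b : bool :=
  if w is a :: w' then (a == b) || I a b && min_letter w' b else false.

Lemma min_letter_rcons w a b :
  min_letter (rcons w a) b = min_letter w b || (a == b) && all (I^~ b) w.
Proof.
elim: w => [|c w IH] /=; first by rewrite andbF !orbF andbT.
rewrite IH; case: (c == b) => //=.
by case: (I c b); case: (min_letter w b); case: (a == b).
Qed.

Lemma nf_state_rcons w a : nf_state I (rcons w a) = nf_step I (nf_state I w) a.
Proof. exact: foldl_rcons. Qed.

Lemma Cl_above_height w i : (nf_state I w).1 <= i -> Cl I w i = finset.set0.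
Proof.
elim/last_ind: w i => [//|w a IH] i; move: IH; rewrite /Cl nf_state_rcons.
case: (nf_state I w) => h s /= IH; rewrite geq_max => /andP[hi li].
by case: eqP => [il|_]; [move: li; rewrite il ltnn | exact: IH].
Qed.

Lemma mem_Cl w b : reflect (exists i, b \in Cl I w i) (b \in w).
Proof.
elim/last_ind: w => [|w a IH]; first by apply: (iffP idP) => // -[i]; rewrite inE.
move: IH; rewrite mem_rcons in_cons /Cl nf_state_rcons.
case: (nf_state I w) => h s /= IH; set l := (\max_(i < h | _) _).
apply: (iffP orP) => [[/eqP ->|/IH[i bi]]|[i]].
- by exists l; rewrite eqxx setU11.
- by exists i; case: eqP => _ //; rewrite setU1r.
- case: eqP => _; last by move=> bi; right; apply/IH; exists i.
  by rewrite in_setU1 => /orP[->|bi]; [left | right; apply/IH; exists i].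
Qed.

(* The left-hand side compares with 0 the level at which [nf_step] files [a]. *)
Lemma nf_level_eq0 w a :
  ((\max_(i < (nf_state I w).1 | [exists b in Cl I w i, ~~ I a b]) i.+1) == 0)
  = all (I^~ a) w.
Proof.
rewrite -leqn0; apply/bigmax_leqP/allP => [no_dep b /mem_Cl[i bi] | indep i].
  apply: contraT => Nba; have ih : i < (nf_state I w).1.
    by rewrite ltnNge; apply: contraL bi => /Cl_above_height ->; rewrite inE.
  have := no_dep (Ordinal ih); rewrite ltn0; apply.
  by apply/exists_inP; exists b; rewrite // I_sym.
by move=> /exists_inP[b bi]; rewrite I_sym indep //; apply/mem_Cl; exists i.
Qed.

Lemma mem_Cl0 w b : (b \in Cl I w 0) = min_letter w b.
Proof.
elim/last_ind: w => [|w a IH]; first by rewrite /Cl inE.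
have := nf_level_eq0 w a; move: IH; rewrite min_letter_rcons /Cl nf_state_rcons.
case: (nf_state I w) => h s /= <-; set l := (\max_(i < h | _) _) => Hl.
rewrite [0 == l]eq_sym Hl; case: (eqVneq b a) => [->|ba].
  by rewrite orbC; case: (all _ w); rewrite ?setU11.
by rewrite orbF; case: ifP; rewrite // in_setU1 (negPf ba).
Qed.

Lemma Cl_pairwise s i :
  pairwise I s -> Cl I s i = if i == 0 then [set x in s] else finset.set0.
Proof.
elim/last_ind: s i => [|s a IH] i.
  by rewrite /Cl /=; case: ifP => // _; apply/setP => x; rewrite !inE.
rewrite pairwise_rcons => /andP[indep /IH {}IH].
have := nf_level_eq0 s a; rewrite indep.
move: IH; rewrite /Cl nf_state_rcons; case: (nf_state I s) => h f /= IH /eqP ->.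
rewrite IH; case: i => [|i] //=.
by apply/setP => x; rewrite !inE mem_rcons in_cons.
Qed.

Lemma mem_Cl0_head e w : e \in Cl I (e :: w) 0.
Proof. by rewrite mem_Cl0 /= eqxx. Qed.

Lemma mem_Cl0_cons e w b :
  b != e -> (b \in Cl I (e :: w) 0) = I e b && (b \in Cl I w 0).
Proof. by move=> be; rewrite !mem_Cl0 /= eq_sym (negPf be). Qed.

Lemma min_letter_rem w a b : min_letter w b -> a != b -> min_letter (rem a w) b.
Proof.
elim: w => [//|c w IH] /=; case: (eqVneq c a) => [->|_] /=.
  by case: (eqVneq a b) => [->|_] //= /andP[].
by case: (eqVneq c b) => //= _ /andP[-> /IH].
Qed.

Lemma is_cliqueP c : reflect {in c &, forall a b, a != b -> I a b} (is_clique I c).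
Proof.
apply: (iffP forall_inP) => [ccl a b ac bc | ccl a ac].
  by move/forall_inP: (ccl a ac) => /(_ b bc) /implyP.
by apply/forall_inP => b bc; apply/implyP; apply: ccl.
Qed.

Lemma is_cliqueS c d : c \subset d -> is_clique I d -> is_clique I c.
Proof.
move=> /fintype.subsetP cd /is_cliqueP dcl; apply/is_cliqueP => a b ac bc.
by apply: dcl; apply: cd.
Qed.

Lemma pairwise_enum_clique c : is_clique I c -> pairwise I (enum c).
Proof.
move/is_cliqueP => ccl; apply: (@sub_in_pairwise _ (mem c) [rel x y | x != y]).
- exact: ccl.
- by apply/allP => a; rewrite mem_enum.
- by rewrite -uniq_pairwise enum_uniq.
Qed.

End FirstClique.

Section Runs.
Variables (Sigma X : finType) (I : rel Sigma) (act : X -> Sigma -> option X).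
Hypothesis I_sym : symmetric I.
Hypothesis act_comm : action_compatible I act.

Lemma act_opt_comm o a b :
  I a b -> act_opt act (act_opt act o a) b = act_opt act (act_opt act o b) a.
Proof. by case: o => [g|] //= /act_comm. Qed.

Lemma run_cons g e g' w : act g e = Some g' -> run act g (e :: w) = run act g' w.
Proof. by rewrite /run /= => ->. Qed.

Lemma foldl_act_None w : foldl (act_opt act) None w = None.
Proof. by elim: w. Qed.

Lemma foldl_act_rem o w a : min_letter I w a ->
  foldl (act_opt act) o w = foldl (act_opt act) (act_opt act o a) (rem a w).
Proof.
elim: w o => [//|b w IH] o /=; case: (eqVneq b a) => [->|_] //= /andP[Iba wa].
by rewrite IH // act_opt_comm // I_sym.
Qed.

Lemma inM_min_letters g w s :
  inM act g w -> uniq s -> all (min_letter I w) s -> inM act g s.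
Proof.
elim: s g w => [//|a s IH] g w + /andP[a_s us] /andP[wa ws].
rewrite /inM /run (foldl_act_rem _ wa) /=.
case: (act g a) => [g'|]; last by rewrite foldl_act_None.
move=> w_in; apply: (IH g' (rem a w)) => //; apply/allP => b bs.
by apply: min_letter_rem; [move/allP: ws; apply | apply: contraNneq a_s => ->].
Qed.

End Runs.

Section SubsetSums.
Variables (T : finType) (R : numDomainType).
Implicit Types (c d s D E L : {set T}).

Lemma sum_subset_sign D :
  \sum_(s : {set T} | s \subset D) (-1) ^+ #|s| = (D == finset.set0)%:R :> R.
Proof.
have [->|[a aD]] := set_0Vmem D.
  rewrite (eq_bigl (pred1 finset.set0)) => [|s]; last by rewrite /= finset.subset0.
  by rewrite big_pred1_eq cards0 eqxx.
pose toggle s := if a \in s then s :\ a else a |: s.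
have toggleK : involutive toggle.
  move=> s; rewrite /toggle; have [a_s|a_s] /= := boolP (a \in s).
    by rewrite setD11 finset.setD1K.
  by rewrite setU11 setU1K.
have sub_toggle s : (toggle s \subset D) = (s \subset D).
  rewrite /toggle; case: ifP => _; last by rewrite finset.subUset finset.sub1set aD.
  rewrite subDset; suff -> : a |: D = D by [].
  by apply/finset.setUidPr; rewrite finset.sub1set.
have sign_toggle s : (-1) ^+ #|toggle s| = - (-1) ^+ #|s| :> R.
  rewrite /toggle; case: ifP => a_s; last by rewrite cardsU1 a_s exprS mulN1r.
  by rewrite [in RHS](cardsD1 a s) a_s exprS mulN1r opprK.
set S := (X in X = _).
have SN : S = - S.
  rewrite {1}/S (reindex_inj (inv_inj toggleK)) /= -sumrN.
  by apply: eq_big => s; [exact: sub_toggle | move=> _; exact: sign_toggle].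
have /negPf -> : D != finset.set0 by apply/set0Pn; exists a.
by apply/eqP; have := mulrn_eq0 S 2; rewrite mulr2n {1}SN addNr eqxx => /esym.
Qed.

Lemma inclusion_exclusion (P : {set T} -> R) E L :
  \sum_(s : {set T} | s \subset L)
     (-1) ^+ #|s| * \sum_(d : {set T} | E :|: s \subset d) P d =
  \sum_(d : {set T} | (E \subset d) && [disjoint L & d]) P d.
Proof.
under eq_bigr do rewrite mulr_sumr.
rewrite (exchange_big_dep (fun d => E \subset d)) /=; last first.
  by move=> s d _; rewrite finset.subUset => /andP[].
rewrite [RHS]big_mkcondr /=; apply: eq_bigr => d Ed.
rewrite -mulr_suml (eq_bigl (fun s => s \subset L :&: d)) => [|s]; last first.
  by rewrite finset.subsetI finset.subUset Ed.
by rewrite sum_subset_sign setI_eq0; case: ifP; rewrite ?mul1r ?mul0r.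
Qed.

Lemma sum_supsets (F : {set T} -> R) c :
  \sum_(d : {set T} | c \subset d) F d =
  \sum_(s : {set T} | s \subset ~: c) F (c :|: s).
Proof.
rewrite (reindex_onto (fun s => c :|: s) (fun d => d :\: c)) /=; last first.
  move=> d cd; apply/setP => x; rewrite !inE.
  by case: (boolP (x \in c)) => //= xc; rewrite (fintype.subsetP cd).
apply: eq_bigl => s; rewrite finset.subsetUl finset.setDUl finset.setDv.
rewrite finset.set0U -finset.disjoints_subset.
exact: sameP eqP finset.setDidPl.
Qed.

End SubsetSums.

Lemma countable_bigcup_measurable d (T : sigmaRingType d) (U : countType)
    (D : set U) (F : U -> set T) :
  (forall u, D u -> measurable (F u)) -> measurable (\bigcup_(u in D) F u).
Proof.
move=> mF; rewrite bigcup_mkcond; apply: countable_bigcupT_measurable => [|u].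
  exact: countableP.
by case: ifPn => // /set_mem /mF.
Qed.

Section HeadEvents.
Local Open Scope classical_set_scope.
Variables (Sigma : finType) (I : rel Sigma).
Implicit Types (Q : pred {set Sigma}) (d : {set Sigma}).
Local Notation T := (BndSpace Sigma).

Lemma measurable_coord2 i j (Q : set ({set Sigma} * {set Sigma})) :
  measurable [set xi : T | Q (xi i, xi j)].
Proof.
have -> : [set xi : T | Q (xi i, xi j)] =
    \bigcup_(p in Q) ([set xi : T | xi i = p.1] `&` [set xi | xi j = p.2]).
  apply/seteqP; split => [xi Qxi|xi [[c c'] Qcc' [/= -> ->]] //].
  by exists (xi i, xi j).
apply: countable_bigcup_measurable => p _.
by apply: measurableI; apply: sub_sigma_algebra; eexists; eexists.
Qed.

Lemma measurable_boundary : measurable (boundary I : set T).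
Proof.
pose Q (p : {set Sigma} * {set Sigma}) :=
  [/\ p.1 != finset.set0, is_clique I p.1 & clique_arrow I p.1 p.2].
have -> : boundary I = \bigcap_i [set xi : T | Q (xi i, xi i.+1)].
  by apply/seteqP; split => [xi bxi i _|xi bxi i]; [exact: bxi | exact: bxi].
by apply: bigcapT_measurable => i; apply: measurable_coord2.
Qed.

Lemma measurable_boundary_at (X : finType) (act : X -> Sigma -> option X) g :
  measurable (boundary_at I act g : set T).
Proof.
have -> : boundary_at I act g = boundary I `&`
    \bigcap_n \bigcup_(w in [set w | inM act g w])
      \bigcap_i (if (i < n)%N then [set xi : T | xi i = Cl I w i] else setT).
  apply/seteqP; split => xi [bxi prefix]; split => // n.
    have [w [w_in wxi]] := prefix n.
    by exists w => // i _; case: ifP => // /wxi ->.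
  have [w w_in wxi] := prefix n Logic.I; exists w; split => // i lt_in.
  by have := wxi i Logic.I; rewrite lt_in.
apply: measurableI; first exact: measurable_boundary.
apply: bigcapT_measurable => n; apply: countable_bigcup_measurable => w _.
apply: bigcapT_measurable => i; case: ifP => _ //.
by apply: sub_sigma_algebra; eexists; eexists.
Qed.

Definition head_event Q : set T := boundary I `&` [set xi | Q (xi 0%N)].

Lemma measurable_head_event Q : measurable (head_event Q).
Proof.
apply: measurableI; first exact: measurable_boundary.
exact: (measurable_coord2 0 0 (fun p => Q p.1)).
Qed.

Lemma head_eventU Q Q' : head_event [predU Q & Q'] = head_event Q `|` head_event Q'.
Proof.
by rewrite /head_event -setIUr; congr (_ `&` _); apply/seteqP; split=> xi /orP.
Qed.

Lemma upset_pairwise s : symmetric I -> pairwise I s ->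
  upset I s = head_event (fun d => [set x in s] \subset d).
Proof.
move=> I_sym ps; apply/seteqP; split => xi [bxi sub]; split => //.
  by have := sub 0%N; rewrite Cl_pairwise.
by case=> [|i]; rewrite Cl_pairwise //=; exact: finset.sub0set.
Qed.

Variables (R : realType) (P : probability T R).

Definition head_prob d : R := fine (P (head_event (pred1 d))).

Lemma head_prob_ge0 d : 0 <= head_prob d.
Proof. exact/fine_ge0/measure_ge0. Qed.

Lemma head_prob_nonclique d : ~~ is_clique I d -> head_prob d = 0.
Proof.
move=> dN; rewrite /head_prob (_ : head_event _ = set0) ?measure0 //.
apply/seteqP; split => // xi [/(_ 0%N)[_ xi0 _] /= /eqP xd].
by rewrite -xd xi0 in dN.
Qed.

Lemma measure_head_event_seq r : uniq r ->
  P (head_event (mem r)) = \sum_(d <- r) P (head_event (pred1 d)).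
Proof.
elim: r => [_|d r IH /andP[dr ur]].
  by rewrite big_nil -(measure0 P); congr (P _); apply/seteqP; split => // xi [].
rewrite big_cons -IH // -measureU; try exact: measurable_head_event.
  by rewrite -head_eventU; congr (P (head_event _)); apply/funext => d'; rewrite /= inE.
apply/seteqP; split => // xi [[_ /eqP xd] [_]] /=.
by rewrite xd (negPf dr).
Qed.

Lemma head_event_sum Q : P (head_event Q) = (\sum_(d | Q d) head_prob d)%:E.
Proof.
rewrite EFin_sum_fine => [|d _]; last first.
  exact: fin_num_measure P _ (measurable_head_event _).
rewrite -big_filter -measure_head_event_seq ?filter_uniq ?index_enum_uniq //.
congr (P (head_event _)); apply/funext => d.
by rewrite /= mem_filter mem_index_enum andbT.
Qed.

Lemma head_prob_sum_le1 Q : \sum_(d | Q d) head_prob d <= 1.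
Proof.
rewrite -lee_fin -head_event_sum; apply: probability_le1.
exact: measurable_head_event.
Qed.

End HeadEvents.

Section UniformMeasure.
Variables (Sigma X : finType) (I : rel Sigma) (act : X -> Sigma -> option X).
Variables (R : realType) (nu : X -> probability (BndSpace Sigma) R).
Hypothesis I_sym : symmetric I.
Hypothesis act_comm : action_compatible I act.
Hypothesis nu_unif : uniform_measure I act nu.
Implicit Types (g : X) (e : Sigma) (A E L : {set Sigma}).

Local Notation C1 w := (Cl I w 0).
Local Notation p g := (head_prob I (nu g)).

Definition cover_prob g A : R := \sum_(d : {set Sigma} | A \subset d) p g d.

Definition avoid_prob g E L : R :=
  \sum_(d : {set Sigma} | (E \subset d) && [disjoint L & d]) p g d.

Lemma avoid_probE g E L :
  avoid_prob g E L =
    \sum_(s : {set Sigma} | s \subset L) (-1) ^+ #|s| * cover_prob g (E :|: s).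
Proof. exact/esym/inclusion_exclusion. Qed.

Lemma avoid_probS g E E' L : E \subset E' -> avoid_prob g E' L <= avoid_prob g E L.
Proof.
move=> EE'; rewrite /avoid_prob big_mkcond [leRHS]big_mkcond /=.
apply: ler_sum => d _; case: ifP => [/andP[/(fintype.subset_trans EE') -> ->] //|_].
by case: ifP => // _; apply: head_prob_ge0.
Qed.

Lemma fval_pairwise g s : pairwise I s -> fval I nu g s = cover_prob g [set x in s].
Proof. by move=> ps; rewrite /fval upset_pairwise // head_event_sum. Qed.

Lemma fval_gt0 g x g' : run act g x = Some g' -> 0 < fval I nu g x.
Proof.
case: nu_unif => _ _ [t [D [t_gt0 D_gt0 nuE]]] gx.
by rewrite /fval (nuE _ _ _ gx) /= mulr_gt0 // exprn_gt0.
Qed.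

Lemma fvalM g x g' y : run act g x = Some g' -> inM act g' y ->
  fval I nu g (x ++ y) = fval I nu g x * fval I nu g' y.
Proof.
move=> gx y_in; case: nu_unif => _ nuM [t [D [_ _ nuE]]].
move: (y_in); rewrite /inM; case gy: (run act g' y) => [g''|//] _.
by rewrite /fval (nuM _ _ _ _ gx y_in) (nuE _ _ _ gx) (nuE _ _ _ gy) -EFinM.
Qed.

Lemma cover_prob_nonclique g A : ~~ is_clique I A -> cover_prob g A = 0.
Proof.
move=> AN; apply: big1 => d Ad; apply: head_prob_nonclique.
by apply: contra AN; apply: is_cliqueS.
Qed.

Lemma head_prob_sum_full g (Q : pred {set Sigma}) :
  (forall w, inM act g w -> Q (C1 w)) -> \sum_(d : {set Sigma} | Q d) p g d = 1.
Proof.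
move=> QC1; apply/le_anti; rewrite head_prob_sum_le1 /= -lee_fin -head_event_sum.
case: nu_unif => nu_bnd _ _; rewrite -(nu_bnd g); apply: le_measure; rewrite ?inE.
- exact: measurable_boundary_at.
- exact: measurable_head_event.
by move=> xi [bxi /(_ 1%N)[w [w_in wxi]]]; split; rewrite //= -wxi //; apply: QC1.
Qed.

Lemma head_prob_sum_null g (Q : pred {set Sigma}) :
  (forall w, inM act g w -> ~~ Q (C1 w)) -> \sum_(d : {set Sigma} | Q d) p g d = 0.
Proof.
move=> QC1; have := head_prob_sum_le1 I (nu g) predT.
rewrite (bigID Q) /= (head_prob_sum_full (Q := predC Q)) // => le1.
suff : 0 <= \sum_(d : {set Sigma} | Q d) p g d by lra.
by apply: sumr_ge0 => d _; apply: head_prob_ge0.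
Qed.

Lemma cover_prob_not_inM g s :
  uniq s -> ~~ inM act g s -> cover_prob g [set x in s] = 0.
Proof.
move=> us sN; apply: head_prob_sum_null => w w_in; apply: contra sN => sC1.
apply: (inM_min_letters act_comm w_in us); apply/allP => a a_s.
by rewrite -mem_Cl0 //; apply: (fintype.subsetP sC1); rewrite inE.
Qed.

Lemma cover_prob_letter_gt0 g e g' : act g e = Some g' -> 0 < cover_prob g [set e].
Proof.
move=> ge; have -> : [set e] = [set x in [:: e]] by apply/setP => x; rewrite !inE.
by rewrite -fval_pairwise // (fval_gt0 (g' := g')) // /run /= ge.
Qed.

Lemma cover_prob_cons g e g' A : act g e = Some g' -> e \notin A ->
  {in A, forall b, I e b} ->
  cover_prob g (e |: A) = cover_prob g [set e] * cover_prob g' A.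
Proof.
move=> ge eA IeA; have [Acl|AN] := boolP (is_clique I A); last first.
  rewrite (cover_prob_nonclique g' AN) mulr0 cover_prob_nonclique //; apply: contra AN.
  exact: is_cliqueS (finset.subsetUr _ _).
have p_eA : pairwise I (e :: enum A).
  rewrite /= pairwise_enum_clique // andbT.
  by apply/allP => b; rewrite mem_enum; apply: IeA.
have -> : e |: A = [set x in e :: enum A] by apply/setP => x; rewrite !inE mem_enum.
have -> : [set e] = [set x in [:: e]] by apply/setP => x; rewrite !inE.
have -> : cover_prob g' A = cover_prob g' [set x in enum A] by rewrite set_enum.
have [A_in|AN] := boolP (inM act g' (enum A)); last first.
  rewrite (cover_prob_not_inM (enum_uniq _) AN) mulr0 cover_prob_not_inM //=.
    by rewrite mem_enum eA enum_uniq.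
  by rewrite /inM (run_cons _ ge).
rewrite -!fval_pairwise ?p_eA ?pairwise_enum_clique //.
by apply: (fvalM (x := [:: e])) A_in; rewrite /run /= ge.
Qed.

Lemma avoid_prob_cons g e g' E L : act g e = Some g' -> e \notin L -> e \notin E ->
  {in E, forall b, I e b} ->
  avoid_prob g (e |: E) L =
    cover_prob g [set e] * avoid_prob g' E (L :&: [set b | I e b]).
Proof.
move=> ge eL eE IeE; set L' := L :&: _.
rewrite !avoid_probE (bigID (fun s : {set Sigma} => s \subset L')) /=.
rewrite [X in _ + X]big1 ?addr0.
  rewrite mulr_sumr; apply: eq_big => [s|s /andP[_ sL']].
    by apply/andb_idl => sL'; apply: fintype.subset_trans sL' (finset.subsetIl _ _).
  rewrite -finset.setUA (cover_prob_cons ge); first exact: mulrCA.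
    rewrite !inE negb_or eE /=.
    by apply: contraNN eL => /(fintype.subsetP sL'); rewrite inE => /andP[].
  move=> b /finset.setUP[/IeE //|/(fintype.subsetP sL')].
  by rewrite !inE => /andP[].
(* A letter of L dependent on e cannot lie in a clique together with e. *)
move=> s /andP[sL /fintype.subsetPn[b bs bL']].
rewrite cover_prob_nonclique ?mulr0 //; apply/is_cliqueP => eEs_cl.
have bL : b \in L by apply: (fintype.subsetP sL).
move: bL'; rewrite !inE bL /= eEs_cl ?inE ?eqxx ?bs ?orbT //.
by apply: contraNneq eL => ->.
Qed.

Lemma avoid_prob_gt0 x g E L : inM act g x ->
  (forall g' y, run act g x = Some g' -> inM act g' y ->
     (E \subset C1 (x ++ y)) && [disjoint L & C1 (x ++ y)]) ->
  0 < avoid_prob g E L.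
Proof.
elim: x g E L => [|e x IH] g E L x_in C1_xy.
  by rewrite /avoid_prob head_prob_sum_full ?ltr01 // => w; apply: C1_xy.
case ge: (act g e) x_in => [g'|]; last by rewrite /inM /run /= ge foldl_act_None.
rewrite /inM (run_cons _ ge); case gx: (run act g' x) => [g''|//] _.
have /andP[E_C1 L_C1] := C1_xy g'' [::] (etrans (run_cons _ ge) gx) erefl.
rewrite cats0 in E_C1 L_C1.
have eL : e \notin L by rewrite (disjointFl L_C1) ?mem_Cl0_head.
set L' := L :&: [set b | I e b].
have pos' : 0 < avoid_prob g' (E :\ e) L'.
  apply: (IH _ _ _ (_ : inM act g' x)) => [|g3 y g3x y_in]; first by rewrite /inM gx.
  have /andP[E_C1y L_C1y] := C1_xy g3 y (etrans (run_cons _ ge) g3x) y_in.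
  apply/andP; split.
    apply/fintype.subsetP => b /finset.setD1P[be bE].
    by have := fintype.subsetP E_C1y b bE; rewrite /= mem_Cl0_cons // => /andP[].
  rewrite fintype.disjoint_subset; apply/fintype.subsetP => b /finset.setIP[bL].
  rewrite !inE => Ieb; have be : b != e by apply: contraNneq eL => <-.
  by move: (disjointFr L_C1y bL); rewrite /= mem_Cl0_cons // Ieb /= => ->.
apply: (lt_le_trans _ (avoid_probS _ _ (_ : E \subset e |: (E :\ e)))).
  rewrite (avoid_prob_cons ge) ?mulr_gt0 ?(cover_prob_letter_gt0 ge) ?setD11 //.
  move=> b /finset.setD1P[be /(fintype.subsetP E_C1)].
  by rewrite mem_Cl0_cons // => /andP[].
by apply/fintype.subsetP => b bE; rewrite !inE bE andbT orbN.
Qed.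

Lemma mobius_avoid_prob g c : mobius I nu g c = avoid_prob g c (~: c).
Proof.
transitivity (\sum_(c' : {set Sigma} | c \subset c')
    (-1) ^+ (#|c'| - #|c|) * cover_prob g c').
  rewrite [RHS](bigID (is_clique I)) /= [X in _ + X]big1 ?addr0; last first.
    by move=> c' /andP[_ /cover_prob_nonclique ->]; rewrite mulr0.
  apply: eq_big => [c'|c' /andP[c'_cl _]]; first by rewrite andbC.
  by rewrite fval_pairwise ?pairwise_enum_clique ?set_enum.
rewrite sum_supsets avoid_probE; apply: eq_bigr => s sNc.
have := leq_card_setU c s.
rewrite fintype.disjoint_sym finset.disjoints_subset sNc => -[_ /eqP ->].
by rewrite addKn.
Qed.

End UniformMeasure.

Theorem lemma3 (Sigma X : finType) (I : rel Sigma)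
  (HIirr : irreflexive I) (HIsym : symmetric I)
  (act : X -> Sigma -> option X) (Hact : action_compatible I act)
  (R : realType) (nu : X -> probability (BndSpace Sigma) R)
  (Hnu : uniform_measure I act nu) :
  forall (alpha : X) (c : {set Sigma}),
    positive_node I act alpha c -> 0 < mobius I nu alpha c.
Proof.
move=> alpha c [_ _ _ [x x_in x_pos]].
rewrite (mobius_avoid_prob nu HIsym); apply: (avoid_prob_gt0 HIsym Hact Hnu x_in).
move=> g' y gx y_in; rewrite (x_pos g' gx y y_in) fintype.subxx.
by rewrite finset.disjoints_subset fintype.subxx.
Qed.
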